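(* Let $G$ be a finite simple graph of minimum degree at least $2$, and let $G^{+2}$ be the graph obtained from $G$ by subdividing each edge of $G$ into a path of length $3$ (i.e. replacing each edge $wz$ by a path $wxyz$ with two new vertices $x,y$). Then Sepy has a winning strategy in the Dom-start Disjoint Domination Game played on $G^{+2}$.
   Context: For a vertex $v$, $N[v]$ denotes its closed neighborhood. The Disjoint Domination Game on an isolate-free graph $H$ is played by Dom and Sepy with colors $p$ and $b$; $V_p,V_b$ denote the current sets of vertices of each color. Players alternate; either player may use either color. A move chooses a vertex $v$ and a color $c$ such that (i) $v$ is uncolored and (ii) some $u\in N[v]$ satisfies $N[u]\cap V_c=\emptyset$ (before the move); then $v$ gets color $c$. A player must make a legal move on his turn (no passing). The game ends as soon as either (s* ) some vertex $v$ has $N[v]\subseteq V_p$ or $N[v]\subseteq V_b$ — Sepy wins; or (d* ) both $V_p$ and $V_b$ are dominating sets of $H$ — Dom wins. In the Dom-start game Dom moves first. *)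

From mathcomp Require Import all_boot.
Set Implicit Arguments. Unset Strict Implicit. Unset Printing Implicit Defensive.

Section Game.
Variables (T : finType) (adj : rel T).

Definition cnbhd (v : T) : {set T} := [set u | (u == v) || adj v u].

Definition dominating (D : {set T}) : bool :=
  [forall u, cnbhd u :&: D != set0].

(* colours: true = p, false = b.  A state is the pair (Vp, Vb). *)
Definition colset (Vp Vb : {set T}) (c : bool) : {set T} := if c then Vp else Vb.

Definition legal (Vp Vb : {set T}) (v : T) (c : bool) : bool :=
  (v \notin Vp) && (v \notin Vb) &&
  [exists u in cnbhd v, cnbhd u :&: colset Vp Vb c == set0].

Definition play (Vp Vb : {set T}) (v : T) (c : bool) : {set T} * {set T} :=
  if c then (v |: Vp, Vb) else (Vp, v |: Vb).

Definition sepy_end (Vp Vb : {set T}) : bool :=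
  [exists v, (cnbhd v \subset Vp) || (cnbhd v \subset Vb)].

Definition dom_end (Vp Vb : {set T}) : bool := dominating Vp && dominating Vb.

(* [SepyWins domToMove Vp Vb]: Sepy has a winning strategy from position
   (Vp, Vb) where Dom is to move iff domToMove = true. *)
Inductive SepyWins : bool -> {set T} -> {set T} -> Prop :=
| SW_end : forall d Vp Vb, sepy_end Vp Vb -> SepyWins d Vp Vb
| SW_sepy : forall Vp Vb v c, ~~ sepy_end Vp Vb -> ~~ dom_end Vp Vb ->
    legal Vp Vb v c ->
    SepyWins true (play Vp Vb v c).1 (play Vp Vb v c).2 ->
    SepyWins false Vp Vb
| SW_dom : forall Vp Vb, ~~ sepy_end Vp Vb -> ~~ dom_end Vp Vb ->
    (forall v c, legal Vp Vb v c ->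
       SepyWins false (play Vp Vb v c).1 (play Vp Vb v c).2) ->
    SepyWins true Vp Vb.

Definition sepy_wins_dom_start : Prop := SepyWins true set0 set0.
End Game.

(* The subdivision G^{+2}: vertices are the original vertices plus one new
   vertex (w,z) for each ordered adjacent pair; the edge wz becomes the path
   w - (w,z) - (z,w) - z. *)
Section Subdiv.
Variables (V : finType) (e : rel V).
Definition darts := {p : V * V | e p.1 p.2}.
Definition sub2_vertex := (V + darts)%type.
Definition sub2_adj : rel sub2_vertex := fun a b =>
  match a, b with
  | inl _, inl _ => false
  | inl w, inr p => (val p).1 == w
  | inr p, inl w => (val p).1 == w
  | inr p, inr q => val q == ((val p).2, (val p).1)
  end.
End Subdiv.

From mathcomp Require Import all_boot.
Set Implicit Arguments. Unset Strict Implicit. Unset Printing Implicit Defensive.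

(* In G^{+2} the closed neighbourhoods of distinct original vertices are disjoint, and the
   subdivision vertex p = (w,z) next to w has N[p] = {p, w, rev p}, with rev p = (z,w) next
   to z.  Sepy always plays the colour c of Dom's first move.  Once w has colour c and N[w]
   meets no vertex of the other colour, Sepy colours an uncoloured p next to w with c.  This
   threatens to colour rev p with c as well, making N[p] monochromatic; the threat is legal
   as long as N[z] has no vertex of colour c.  Dom can parry only by colouring rev p with
   the other colour or a vertex of N[z] with c, and either way [star_invariant] survives with
   one more vertex of N[w] coloured c.  The other colour never meets N[w] (or N[p] while a
   threat is pending), so Dom never wins, and once N[w] is coloured c Sepy has won.
   Minimum degree 2 is used only when Dom opens on a subdivision vertex p next to w: Sepy
   then colours w, which is legal thanks to a second subdivision vertex next to w. *)

Lemma disjointP (T : finType) (A B : {set T}) :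
  reflect (forall x, x \in A -> x \notin B) [disjoint A & B].
Proof.
apply: (iffP pred0P) => [AB x xA | AB x /=].
  by apply/negP => xB; move: (AB x); rewrite /= xA xB.
by apply/andP => -[/AB /negP].
Qed.

Lemma disjointsU1 (T : finType) (x : T) (A B : {set T}) :
  [disjoint A & x |: B] = (x \notin A) && [disjoint A & B].
Proof.
apply/disjointP/andP => [AxB | [xA AB] y yA].
  split; first by apply/negP => /AxB; rewrite setU11.
  by apply/disjointP => y /AxB; rewrite in_setU1 negb_or => /andP[].
by rewrite in_setU1 negb_or (disjointFr AB yA) andbT; apply: contraNneq xA => <-.
Qed.

Lemma card_setD_ltn (T : finType) (X A A' : {set T}) x :
  A \subset A' -> x \in X -> x \notin A -> x \in A' -> #|X :\: A'| < #|X :\: A|.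
Proof.
move=> AA' xX xA xA'; apply/proper_card/properP; split; first exact: setDS.
by exists x; rewrite !inE ?xX ?xA ?xA'.
Qed.

(* A position seen from Sepy's side: A has Sepy's colour c, B the other colour. *)
Definition position (T : Type) (c : bool) (A B : T) : T * T :=
  if c then (A, B) else (B, A).

Local Notation sepy_wins_at adj d c A B :=
  (SepyWins adj d (position c A B).1 (position c A B).2).

Section Game.
Variables (T : finType) (adj : rel T).
Local Notation N := (cnbhd adj).

Lemma mem_cnbhd_self v : v \in N v.
Proof. by rewrite inE eqxx. Qed.

Lemma not_dominating u (B : {set T}) : [disjoint N u & B] -> ~~ dominating adj B.
Proof. by move=> uB; apply/forallPn; exists u; rewrite setI_eq0 negbK. Qed.

Lemma not_sepy_end0 : ~~ sepy_end adj set0 set0.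
Proof.
by apply/existsPn => v; rewrite orbb; apply/subsetPn; exists v; rewrite ?mem_cnbhd_self ?inE.
Qed.

Lemma not_dom_end0 (u : T) : ~~ dom_end adj set0 set0.
Proof.
by rewrite /dom_end andbb; apply: (@not_dominating u); apply/disjointP => x _; rewrite inE.
Qed.

Lemma play_position c (A B : {set T}) v d :
  play (position c A B).1 (position c A B).2 v d =
  position c (if d == c then v |: A else A) (if d == c then B else v |: B).
Proof. by case: c; case: d. Qed.

Lemma dom_end_position c (A B : {set T}) :
  dom_end adj (position c A B).1 (position c A B).2 = dominating adj A && dominating adj B.
Proof. by case: c; rewrite /dom_end // andbC. Qed.

Lemma legal_position c (A B : {set T}) v :
  legal adj (position c A B).1 (position c A B).2 v c =
  [&& v \notin A, v \notin B & [exists u in N v, N u :&: A == set0]].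
Proof. by case: c; rewrite /legal /= -andbA // andbCA. Qed.

Lemma legal_position_uncoloured c (A B : {set T}) v d :
  legal adj (position c A B).1 (position c A B).2 v d -> v \notin A /\ v \notin B.
Proof. by case: c => /andP[/andP[? ?] _]. Qed.

Lemma sepy_wins_by_move c (A B : {set T}) v :
  ~~ dominating adj B -> v \notin A -> v \notin B ->
  [exists u in N v, N u :&: A == set0] ->
  sepy_wins_at adj true c (v |: A) B -> sepy_wins_at adj false c A B.
Proof.
move=> nB vA vB threat win.
have [|nend] := boolP (sepy_end adj (position c A B).1 (position c A B).2); first exact: SW_end.
apply: (@SW_sepy _ _ _ _ v c) => //.
- by rewrite dom_end_position (negPf nB) andbF.
- by rewrite legal_position vA vB.
- by rewrite play_position eqxx.
Qed.

Lemma sepy_wins_by_replies c (A B : {set T}) :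
  ~~ dominating adj B ->
  (forall v, v \notin A -> v \notin B ->
     sepy_wins_at adj false c (v |: A) B /\ sepy_wins_at adj false c A (v |: B)) ->
  sepy_wins_at adj true c A B.
Proof.
move=> nB replies.
have [|nend] := boolP (sepy_end adj (position c A B).1 (position c A B).2); first exact: SW_end.
apply: SW_dom => // [|v d /legal_position_uncoloured [vA vB]].
  by rewrite dom_end_position (negPf nB) andbF.
by rewrite play_position; case: eqP => _; case: (replies v vA vB).
Qed.

Lemma sepy_wins_covered d c (A B : {set T}) x :
  N x \subset A -> sepy_wins_at adj d c A B.
Proof. by move=> xA; apply: SW_end; apply/existsP; exists x; case: c; rewrite /= xA ?orbT. Qed.

Lemma sepy_wins_by_closing_move c (A B : {set T}) x v :
  ~~ dominating adj B -> N x \subset v |: A -> v \notin A -> v \notin B ->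
  [exists u in N v, N u :&: A == set0] -> sepy_wins_at adj false c A B.
Proof.
move=> nB xA vA vB threat.
by apply: (sepy_wins_by_move (v := v)) => //; apply: sepy_wins_covered xA.
Qed.

End Game.

Section Subdivision.
Variables (V : finType) (e : rel V).
Hypotheses (e_sym : symmetric e) (e_irr : irreflexive e).
Local Notation vertex := (sub2_vertex e).
Local Notation N := (cnbhd (@sub2_adj V e)).

Lemma dart_tail_neq_head (p : darts e) : (val p).1 != (val p).2.
Proof. by apply/eqP => pE; move: (valP p); rewrite /= pE e_irr. Qed.

Lemma dart_eq (p q : darts e) : (val p).1 = (val q).1 -> (val p).2 = (val q).2 -> p = q.
Proof. by move=> E1 E2; apply: val_inj; case: (val p) (val q) E1 E2 => a b [a' b'] /= -> ->. Qed.

Fact rev_dart_subproof (p : darts e) : e (val p).2 (val p).1.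
Proof. by rewrite e_sym; exact: (valP p). Qed.

Definition rev_dart (p : darts e) : darts e :=
  exist (fun x : V * V => e x.1 x.2) ((val p).2, (val p).1) (rev_dart_subproof p).

Lemma rev_dartK : involutive rev_dart.
Proof. by move=> p; apply: dart_eq. Qed.

Lemma orig_in_cnbhd_orig a w : (inl a \in N (inl w)) = (a == w).
Proof. by rewrite inE /= orbF. Qed.

Lemma dart_in_cnbhd_orig p w : (inr p \in N (inl w)) = ((val p).1 == w).
Proof. by rewrite inE. Qed.

Lemma cnbhd_dart p : N (inr p) = [set inr p; inl (val p).1; inr (rev_dart p)].
Proof.
apply/setP => -[a|q]; rewrite !inE /= !eqE /= orbF; first exact: eq_sym.
by rewrite -[q == rev_dart p]val_eqE /=; case: (sval q) => a b; rewrite xpair_eqE.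
Qed.

Lemma disjoint_cnbhd_orig w z : w != z -> [disjoint N (inl w) & N (inl z)].
Proof.
by move=> wz; apply/disjointP => -[a|p]; rewrite ?orig_in_cnbhd_orig ?dart_in_cnbhd_orig => /eqP->.
Qed.

Lemma exists_other_dart (p : darts e) :
  1 < #|[set u | e (val p).1 u]| -> exists2 p' : darts e, (val p').1 = (val p).1 & p' != p.
Proof.
case/card_gt1P => x [y []]; rewrite !inE => ex ey xy.
have [b eb bp] : exists2 b, e (val p).1 b & b != (val p).2.
  by case: (eqVneq x (val p).2) => [xp|]; [exists y; rewrite // -xp eq_sym | exists x].
by exists (exist (fun x : V * V => e x.1 x.2) ((val p).1, b) eb) => //; apply: contraNneq bp => <-.
Qed.

Lemma tail_threat (p : darts e) :
  1 < #|[set u | e (val p).1 u]| ->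
  [exists u in N (inl (val p).1), N u :&: [set inr p] == set0].
Proof.
case/exists_other_dart => p' p'_tail p'p; apply/existsP; exists (inr p').
rewrite dart_in_cnbhd_orig p'_tail eqxx setI_eq0 disjoint_sym disjoints1 cnbhd_dart !inE /=.
rewrite -[inr p == inr p']/(p == p') eq_sym (negPf p'p) /=.
rewrite -[inr p == inr _]/(p == rev_dart p'); apply/eqP => pE.
by move: (dart_tail_neq_head p'); rewrite p'_tail pE /= eqxx.
Qed.

Lemma far_cnbhd_disjoint (p p' : darts e) :
  (val p).1 = (val p').1 -> p != p' -> [disjoint N (inl (val p).2) & N (inl (val p').2)].
Proof. by move=> E pp'; apply: disjoint_cnbhd_orig; apply: contraNneq pp' => /(dart_eq E) ->. Qed.

Lemma dart_notin_far_cnbhd (p p' : darts e) :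
  (val p).1 = (val p').1 -> inr p \notin N (inl (val p').2).
Proof. by move=> E; rewrite dart_in_cnbhd_orig E dart_tail_neq_head. Qed.

Record star_invariant (w : V) (A B : {set vertex}) : Prop := StarInvariant {
  star_center : inl w \in A;
  star_other : [disjoint N (inl w) & B];
  star_rev : forall p, (val p).1 = w -> inr p \notin A -> inr (rev_dart p) \notin B;
  star_far : forall p, (val p).1 = w -> inr p \notin A -> [disjoint N (inl (val p).2) & A] }.

Lemma star_invariant_init w : star_invariant w [set inl w] set0.
Proof.
split=> [|||p pw _]; rewrite ?set11 //.
- by apply/disjointP => x _; rewrite inE.
- by move=> p _ _; rewrite inE.
by rewrite disjoint_sym disjoints1 orig_in_cnbhd_orig -pw dart_tail_neq_head.
Qed.

Lemma star_invariant_far w A B (p : darts e) v :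
  star_invariant w A B -> (val p).1 = w -> v \in N (inl (val p).2) ->
  star_invariant w (v |: (inr p |: A)) B.
Proof.
case=> wA wB revB farA pw vz; split=> // [|p' p'w|p' p'w].
- by rewrite !in_setU1 wA !orbT.
- by rewrite !in_setU1 !negb_or => /and3P[_ _]; apply: revB.
rewrite !in_setU1 !negb_or => /and3P[_ p'p /(farA _ p'w)].
have E : (val p').1 = (val p).1 by rewrite p'w pw.
rewrite !disjointsU1 => ->; rewrite dart_notin_far_cnbhd // andbT.
by rewrite (disjointFl (far_cnbhd_disjoint E _) vz) //; apply: contraNneq p'p => ->.
Qed.

Lemma star_invariant_rev w A B (p : darts e) :
  star_invariant w A B -> (val p).1 = w ->
  star_invariant w (inr p |: A) (inr (rev_dart p) |: B).
Proof.
case=> wA wB revB farA pw; split=> // [|||p' p'w].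
- by rewrite in_setU1 wA orbT.
- by rewrite disjointsU1 wB dart_in_cnbhd_orig /= -pw eq_sym dart_tail_neq_head.
- move=> p' p'w; rewrite in_setU1 negb_or => /andP[p'p /(revB _ p'w)].
  rewrite in_setU1 negb_or => ->; rewrite andbT.
  by rewrite -[inr _ == _]/(rev_dart p' == rev_dart p) (inj_eq (can_inj rev_dartK)).
rewrite in_setU1 negb_or => /andP[_ /(farA _ p'w)].
by rewrite disjointsU1 => ->; rewrite dart_notin_far_cnbhd // p'w pw.
Qed.

Lemma sepy_wins_by_closing_dart c (A B : {set vertex}) (p : darts e) :
  inl (val p).1 \in A -> inr p \in A -> inr (rev_dart p) \notin B ->
  [disjoint N (inl (val p).2) & A] -> ~~ dominating (@sub2_adj V e) B ->
  sepy_wins_at (@sub2_adj V e) false c A B.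
Proof.
move=> wA pA qB farA nB.
have qz : inr (rev_dart p) \in N (inl (val p).2) by rewrite dart_in_cnbhd_orig.
apply: (@sepy_wins_by_closing_move _ _ c A B (inr p) (inr (rev_dart p))) => //.
- by apply/subsetP => x; rewrite cnbhd_dart !inE => /orP[/orP[]|] /eqP->;
    rewrite ?eqxx ?pA ?wA ?orbT.
- by move/disjointP: farA; apply.
apply/existsP; exists (inl (val p).2); rewrite setI_eq0 farA andbT.
by rewrite cnbhd_dart !inE /= eqxx.
Qed.

Lemma sepy_wins_reply_ind c w (A B : {set vertex}) (p : darts e) :
  (forall A' B', #|N (inl w) :\: A'| < #|N (inl w) :\: A| ->
     star_invariant w A' B' -> sepy_wins_at (@sub2_adj V e) false c A' B') ->
  star_invariant w A B -> (val p).1 = w -> inr p \notin A ->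
  sepy_wins_at (@sub2_adj V e) true c (inr p |: A) B.
Proof.
move=> IH inv pw pA; have [wA wB revB farA] := inv.
set q := rev_dart p; set z := (val p).2.
have pN : inr p \in N (inl w) by rewrite dart_in_cnbhd_orig pw.
have qB : inr q \notin B := revB p pw pA.
have NpB : [disjoint N (inr p) & B].
  apply/disjointP => x; rewrite cnbhd_dart !inE => /orP[/orP[]|] /eqP-> //.
  - by rewrite (disjointFr wB pN).
  - by rewrite pw (disjointFr wB (mem_cnbhd_self _ _)).
have wA1 : inl (val p).1 \in inr p |: A by rewrite in_setU1 pw wA orbT.
have pA1 : inr p \in inr p |: A by rewrite setU11.
have farA1 : [disjoint N (inl z) & inr p |: A].
  by rewrite disjointsU1 dart_notin_far_cnbhd // (farA p pw pA).
have shrinks (A' : {set vertex}) :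
    inr p |: A \subset A' -> #|N (inl w) :\: A'| < #|N (inl w) :\: A|.
  move=> sA'; apply: (card_setD_ltn _ pN pA); last by apply: (subsetP sA').
  by apply: subset_trans sA'; rewrite subsetUr.
apply: sepy_wins_by_replies; first exact: not_dominating NpB.
move=> v vA1 vB; split.
- have [vz|vz] := boolP (v \in N (inl z)).
    by apply: IH; [apply: shrinks; rewrite subsetUr | exact: star_invariant_far].
  apply: (@sepy_wins_by_closing_dart c _ _ p) => //.
  - by rewrite in_setU1 wA1 orbT.
  - by rewrite in_setU1 pA1 orbT.
  - by rewrite disjointsU1 vz farA1.
  exact: not_dominating NpB.
have [->|vq] := eqVneq v (inr q).
  by apply: IH; [apply: shrinks | exact: star_invariant_rev].
apply: (@sepy_wins_by_closing_dart c _ _ p) => //.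
  by rewrite in_setU1 negb_or qB andbT eq_sym.
apply: (not_dominating (u := inr p)); rewrite disjointsU1 NpB andbT cnbhd_dart !inE.
by apply/negP => /orP[/orP[]|] /eqP vE; move: vA1 vq; rewrite vE ?pA1 ?wA1 ?eqxx.
Qed.

Lemma sepy_wins_star c w (A B : {set vertex}) :
  star_invariant w A B -> sepy_wins_at (@sub2_adj V e) false c A B.
Proof.
have [n] := ubnP #|N (inl w) :\: A|; elim: n A B => // n IHn A B /ltnSE lt_n inv.
have [wA wB _ farA] := inv.
have [/sepy_wins_covered //|/subsetPn [[a|p] uN uA]] := boolP (N (inl w) \subset A).
  by move: uN uA; rewrite orig_in_cnbhd_orig => /eqP->; rewrite wA.
move: uN; rewrite dart_in_cnbhd_orig => /eqP pw.
have qz : inr (rev_dart p) \in N (inl (val p).2) by rewrite dart_in_cnbhd_orig.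
apply: (@sepy_wins_by_move _ _ c A B (inr p)) => //.
- exact: not_dominating wB.
- by rewrite (disjointFr wB) // dart_in_cnbhd_orig pw.
- apply/existsP; exists (inr (rev_dart p)); rewrite setI_eq0 cnbhd_dart !inE eqxx orbT /=.
  apply/disjointP => x; rewrite cnbhd_dart !inE rev_dartK => /orP[/orP[]|] /eqP-> //.
  + by rewrite (disjointFr (farA p pw uA) qz).
  + by rewrite (disjointFr (farA p pw uA) (mem_cnbhd_self _ _)).
apply: (sepy_wins_reply_ind _ inv pw uA) => A' B' lt' inv'; apply: IHn => //.
exact: leq_trans lt' lt_n.
Qed.

Lemma sepy_wins_reply c w (A B : {set vertex}) (p : darts e) :
  star_invariant w A B -> (val p).1 = w -> inr p \notin A ->
  sepy_wins_at (@sub2_adj V e) true c (inr p |: A) B.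
Proof. by apply: sepy_wins_reply_ind => A' B' _; apply: sepy_wins_star. Qed.

End Subdivision.

Theorem proposition7 (V : finType) (e : rel V) :
  symmetric e -> irreflexive e -> 0 < #|V| ->
  (forall v : V, 2 <= #|[set u | e v u]|) ->
  sepy_wins_dom_start (@sub2_adj V e).
Proof.
move=> e_sym e_irr /card_gt0P [w0 _] deg.
apply: SW_dom => [|| v d _]; [exact: not_sepy_end0 | exact: (not_dom_end0 _ (inl w0)) |].
have -> : play set0 set0 v d = position d [set v] set0 by case: d; rewrite /play setU0.
case: v => [a|p]; first exact/sepy_wins_star/star_invariant_init.
apply: (sepy_wins_by_move (v := inl (val p).1)).
- by apply: (not_dominating (u := inl w0)); apply/disjointP => x _; rewrite inE.
- by rewrite inE.
- by rewrite inE.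
- exact: tail_threat (deg _).
rewrite setUC; apply: (sepy_wins_reply e_irr d (star_invariant_init e_sym e_irr _)) => //.
by rewrite inE.
Qed.
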